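(* Let $\mathbf{C}$ be a small 2-category and let $\mathbf{D}$ be a 2-category equipped with an enhanced factorization system $(\mathcal{E},\mathcal{M})$. Let $F,G\colon \mathbf{C}\to\mathbf{D}$ be 2-functors and $\alpha\colon F\Rightarrow G$ a 2-natural transformation (a 1-cell of $\mathbf{D}^{\mathbf{C}}$). Then there exist a 2-functor $I\colon\mathbf{C}\to\mathbf{D}$ and 2-natural transformations $\varepsilon\colon F\Rightarrow I$, $\mu\colon I\Rightarrow G$ with $\alpha=\mu\circ\varepsilon$, such that for every object $c\in\mathbf{C}$ the component $\varepsilon_c$ lies in $\mathcal{E}$ and the component $\mu_c$ lies in $\mathcal{M}$.
   Context: For a 2-category $\mathbf{A}$, an enhanced factorization system on $\mathbf{A}$ is a pair $(\mathcal{E},\mathcal{M})$ of classes of 1-cells of $\mathbf{A}$, each containing all isomorphisms, such that: (i) every 1-cell $\alpha$ factors (not necessarily uniquely) as $\alpha=\mu\circ\varepsilon$ with $\varepsilon\in\mathcal{E}$, $\mu\in\mathcal{M}$; (ii) given $\varepsilon\colon F\to F'$ in $\mathcal{E}$, $\mu\colon G\to G'$ in $\mathcal{M}$, 1-cells $\alpha\colon F\to G$, $\alpha'\colon F'\to G'$ and an invertible 2-cell $\Psi\colon \alpha'\varepsilon\Rightarrow\mu\alpha$, there is a unique pair $(\delta,\widetilde\Psi)$ with $\delta\colon F'\to G$ a 1-cell and $\widetilde\Psi\colon\alpha'\Rightarrow\mu\delta$ an invertible 2-cell such that $\delta\varepsilon=\alpha$ and the whiskering $\widetilde\Psi\varepsilon=\Psi$;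 moreover if $\Psi$ is an identity then $\mu\delta=\alpha'$ and $\widetilde\Psi$ is an identity; (iii) given $\varepsilon\colon F\to F'$ in $\mathcal{E}$, $\mu\colon G\to G'$ in $\mathcal{M}$, parallel 1-cells $\alpha_1,\alpha_2\colon F\to G$ and $\alpha_1',\alpha_2'\colon F'\to G'$ with $\alpha_i'\varepsilon=\mu\alpha_i$ ($i=1,2$), and 2-cells $\Phi\colon\alpha_1\Rightarrow\alpha_2$, $\Phi'\colon\alpha_1'\Rightarrow\alpha_2'$ with $\mu\Phi=\Phi'\varepsilon$, let $\delta_i\colon F'\to G$ be the unique 1-cells with $\delta_i\varepsilon=\alpha_i$ and $\mu\delta_i=\alpha_i'$ (from (ii) with identity 2-cell); then there is a unique 2-cell $\Delta\colon\delta_1\Rightarrow\delta_2$ with $\Delta\varepsilon=\Phi$ and $\mu\Delta=\Phi'$. $\mathbf{D}^{\mathbf{C}}$ denotes the 2-category of 2-functors $\mathbf{C}\to\mathbf{D}$, 2-natural transformations, and modifications. *)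

Set Implicit Arguments.
Set Universe Polymorphism.

Record TwoCatData := mkTwoCatData {
  Ob : Type;
  Hom : Ob -> Ob -> Type;
  Cell : forall a b : Ob, Hom a b -> Hom a b -> Type;
  id1 : forall a : Ob, Hom a a;
  (* comp1 g f = g o f *)
  comp1 : forall a b c : Ob, Hom b c -> Hom a b -> Hom a c;
  id2 : forall (a b : Ob) (f : Hom a b), Cell f f;
  (* vertical composition: vcomp y x = y . x  (first x then y) *)
  vcomp : forall (a b : Ob) (f g h : Hom a b), Cell g h -> Cell f g -> Cell f h;
  hcomp : forall (a b c : Ob) (f f' : Hom a b) (g g' : Hom b c),
      Cell g g' -> Cell f f' -> Cell (comp1 g f) (comp1 g' f')
}.

Arguments Hom {_} _ _.
Arguments Cell {_ a b} _ _.
Arguments id1 {_} a.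
Arguments comp1 {_ a b c} _ _.
Arguments id2 {_ a b} f.
Arguments vcomp {_ a b f g h} _ _.
Arguments hcomp {_ a b c f f' g g'} _ _.

Definition cellcast {D : TwoCatData} {a b : Ob D} {f f' g g' : Hom a b}
  (e1 : f = f') (e2 : g = g') (x : Cell f g) : Cell f' g' :=
  match e1 in _ = f1 return Cell f1 g' with
  | eq_refl => match e2 in _ = g1 return Cell f g1 with
               | eq_refl => x
               end
  end.

Record TwoCatLaws (D : TwoCatData) : Prop := {
  comp1_assoc : forall (a b c d : Ob D) (h : Hom c d) (g : Hom b c) (f : Hom a b),
      comp1 h (comp1 g f) = comp1 (comp1 h g) f;
  comp1_id_l : forall (a b : Ob D) (f : Hom a b), comp1 (id1 b) f = f;
  comp1_id_r : forall (a b : Ob D) (f : Hom a b), comp1 f (id1 a) = f;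
  vcomp_assoc : forall (a b : Ob D) (f g h k : Hom a b)
      (z : Cell h k) (y : Cell g h) (x : Cell f g),
      vcomp z (vcomp y x) = vcomp (vcomp z y) x;
  vcomp_id_l : forall (a b : Ob D) (f g : Hom a b) (x : Cell f g), vcomp (id2 g) x = x;
  vcomp_id_r : forall (a b : Ob D) (f g : Hom a b) (x : Cell f g), vcomp x (id2 f) = x;
  hcomp_assoc : forall (a b c d : Ob D) (f f' : Hom a b) (g g' : Hom b c) (h h' : Hom c d)
      (z : Cell h h') (y : Cell g g') (x : Cell f f'),
      cellcast (comp1_assoc a b c d h g f) (comp1_assoc a b c d h' g' f') (hcomp z (hcomp y x))
      = hcomp (hcomp z y) x;
  hcomp_id_l : forall (a b : Ob D) (f f' : Hom a b) (x : Cell f f'),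
      cellcast (comp1_id_l a b f) (comp1_id_l a b f') (hcomp (id2 (id1 b)) x) = x;
  hcomp_id_r : forall (a b : Ob D) (f f' : Hom a b) (x : Cell f f'),
      cellcast (comp1_id_r a b f) (comp1_id_r a b f') (hcomp x (id2 (id1 a))) = x;
  hcomp_id2 : forall (a b c : Ob D) (f : Hom a b) (g : Hom b c),
      hcomp (id2 g) (id2 f) = id2 (comp1 g f);
  interchange : forall (a b c : Ob D) (f f' f'' : Hom a b) (g g' g'' : Hom b c)
      (y' : Cell g' g'') (y : Cell g g') (x' : Cell f' f'') (x : Cell f f'),
      hcomp (vcomp y' y) (vcomp x' x) = vcomp (hcomp y' x') (hcomp y x)
}.

Arguments comp1_assoc {D} _ {a b c d} h g f.
Arguments comp1_id_l {D} _ {a b} f.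
Arguments comp1_id_r {D} _ {a b} f.

Record TwoCat := mkTwoCat {
  tc_data :> TwoCatData;
  tc_laws : TwoCatLaws tc_data
}.

Record TwoFunctor (C D : TwoCat) := mkTwoFunctor {
  fob : Ob C -> Ob D;
  fhom : forall a b : Ob C, Hom a b -> Hom (fob a) (fob b);
  fcell : forall (a b : Ob C) (f g : Hom a b), Cell f g -> Cell (fhom a b f) (fhom a b g);
  f_id1 : forall a : Ob C, fhom a a (id1 a) = id1 (fob a);
  f_comp1 : forall (a b c : Ob C) (g : Hom b c) (f : Hom a b),
      fhom a c (comp1 g f) = comp1 (fhom b c g) (fhom a b f);
  f_id2 : forall (a b : Ob C) (f : Hom a b), fcell a b f f (id2 f) = id2 (fhom a b f);
  f_vcomp : forall (a b : Ob C) (f g h : Hom a b) (y : Cell g h) (x : Cell f g),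
      fcell a b f h (vcomp y x) = vcomp (fcell a b g h y) (fcell a b f g x);
  f_hcomp : forall (a b c : Ob C) (f f' : Hom a b) (g g' : Hom b c)
      (y : Cell g g') (x : Cell f f'),
      cellcast (f_comp1 a b c g f) (f_comp1 a b c g' f')
        (fcell a c (comp1 g f) (comp1 g' f') (hcomp y x))
      = hcomp (fcell b c g g' y) (fcell a b f f' x)
}.

Arguments fob {C D} _ _.
Arguments fhom {C D} _ {a b} _.
Arguments fcell {C D} _ {a b f g} _.

Record TwoNat {C D : TwoCat} (F G : TwoFunctor C D) := mkTwoNat {
  ncomp : forall c : Ob C, Hom (fob F c) (fob G c);
  nat1 : forall (a b : Ob C) (f : Hom a b),
      comp1 (fhom G f) (ncomp a) = comp1 (ncomp b) (fhom F f);
  nat2 : forall (a b : Ob C) (f g : Hom a b) (x : Cell f g),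
      cellcast (nat1 a b f) (nat1 a b g) (hcomp (fcell G x) (id2 (ncomp a)))
      = hcomp (id2 (ncomp b)) (fcell F x)
}.

Arguments ncomp {C D F G} _ _.

Definition iso1 {D : TwoCatData} {a b : Ob D} (f : Hom a b) : Prop :=
  exists g : Hom b a, comp1 g f = id1 a /\ comp1 f g = id1 b.

Definition inv2 {D : TwoCatData} {a b : Ob D} {f g : Hom a b} (x : Cell f g) : Prop :=
  exists y : Cell g f, vcomp y x = id2 f /\ vcomp x y = id2 g.

Definition HomClass (D : TwoCatData) := forall a b : Ob D, Hom a b -> Prop.

(** Condition in (ii): [d o e = al] and the whiskering [Pt e] equals [Psi]
    (after the canonical identification (m o d) o e = m o (d o e) = m o al). *)
Definition lift_cond (D : TwoCat) {F F' G G' : Ob D} (e : Hom F F') (m : Hom G G')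
  (al : Hom F G) (al' : Hom F' G') (Psi : Cell (comp1 al' e) (comp1 m al))
  (d : Hom F' G) (Pt : Cell al' (comp1 m d)) : Prop :=
  exists h : comp1 d e = al,
    cellcast eq_refl
      (eq_trans (eq_sym (comp1_assoc (tc_laws D) m d e)) (f_equal (comp1 m) h))
      (hcomp Pt (id2 e)) = Psi.

Definition EFS_lifting (D : TwoCat) (E M : HomClass D) : Prop :=
  forall (F F' G G' : Ob D) (e : Hom F F') (m : Hom G G')
         (al : Hom F G) (al' : Hom F' G') (Psi : Cell (comp1 al' e) (comp1 m al)),
    E _ _ e -> M _ _ m -> inv2 Psi ->
    exists (d : Hom F' G) (Pt : Cell al' (comp1 m d)),
      inv2 Pt /\ lift_cond D e m al al' Psi d Pt /\
      (forall (d' : Hom F' G) (Pt' : Cell al' (comp1 m d')),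
          inv2 Pt' -> lift_cond D e m al al' Psi d' Pt' ->
          existT (fun d0 => Cell al' (comp1 m d0)) d' Pt'
          = existT (fun d0 => Cell al' (comp1 m d0)) d Pt) /\
      ((exists q : comp1 al' e = comp1 m al, Psi = cellcast eq_refl q (id2 (comp1 al' e))) ->
         comp1 m d = al' /\
         exists q' : al' = comp1 m d, Pt = cellcast eq_refl q' (id2 al')).

Definition EFS_2dim (D : TwoCat) (E M : HomClass D) : Prop :=
  forall (F F' G G' : Ob D) (e : Hom F F') (m : Hom G G')
         (a1 a2 : Hom F G) (a1' a2' : Hom F' G')
         (h1 : comp1 a1' e = comp1 m a1) (h2 : comp1 a2' e = comp1 m a2)
         (Phi : Cell a1 a2) (Phi' : Cell a1' a2'),
    E _ _ e -> M _ _ m ->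
    hcomp (id2 m) Phi = cellcast h1 h2 (hcomp Phi' (id2 e)) ->
    forall (d1 d2 : Hom F' G)
           (k1 : comp1 d1 e = a1) (k2 : comp1 d2 e = a2)
           (l1 : comp1 m d1 = a1') (l2 : comp1 m d2 = a2'),
      exists! Delta : Cell d1 d2,
        cellcast k1 k2 (hcomp Delta (id2 e)) = Phi /\
        cellcast l1 l2 (hcomp (id2 m) Delta) = Phi'.

Definition isEFS (D : TwoCat) (E M : HomClass D) : Prop :=
  (forall (a b : Ob D) (f : Hom a b), iso1 f -> E a b f) /\
  (forall (a b : Ob D) (f : Hom a b), iso1 f -> M a b f) /\
  (forall (a b : Ob D) (f : Hom a b),
      exists (c : Ob D) (e : Hom a c) (m : Hom c b),
        E a c e /\ M c b m /\ f = comp1 m e) /\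
  EFS_lifting D E M /\
  EFS_2dim D E M.

From Stdlib Require Import ClassicalEpsilon ProofIrrelevance.

(* Factor every component as [alpha_c = mu_c o eps_c] with [eps_c] in E and
   [mu_c] in M.  For [f : a -> b], naturality of alpha makes the square
   [(G f o mu_a) o eps_a = mu_b o (eps_b o F f)] commute, so the lifting
   property (ii) with the identity 2-cell gives a unique [I f] with
   [I f o eps_a = eps_b o F f] and [mu_b o I f = G f o mu_a]; property (iii)
   likewise gives a unique [I x] for every 2-cell [x].  Uniqueness of these
   fillers makes [I] a 2-functor, and their defining equations are exactly
   the naturality of [eps] and [mu]. *)

Section CellHeq.
Context {D : TwoCat}.

Definition cell_heq {a b : Ob D} {f g f' g' : Hom a b} (x : Cell f g) (y : Cell f' g') : Prop :=
  exists (e1 : f = f') (e2 : g = g'), cellcast e1 e2 x = y.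

Local Infix "=~" := cell_heq (at level 70).

Lemma cell_heq_refl {a b : Ob D} {f g : Hom a b} (x : Cell f g) : x =~ x.
Proof. exists eq_refl, eq_refl. reflexivity. Qed.

Lemma cell_heq_sym {a b : Ob D} {f g f' g' : Hom a b} (x : Cell f g) (y : Cell f' g') :
  x =~ y -> y =~ x.
Proof. intros [e1 [e2 H]]. subst. apply cell_heq_refl. Qed.

Lemma cell_heq_trans {a b : Ob D} {f g f' g' f'' g'' : Hom a b}
  (x : Cell f g) (y : Cell f' g') (z : Cell f'' g'') : x =~ y -> y =~ z -> x =~ z.
Proof. intros [e1 [e2 H]] [e3 [e4 H']]. subst. apply cell_heq_refl. Qed.

Lemma cell_heq_cellcast {a b : Ob D} {f g f' g' : Hom a b}
  (x : Cell f g) (e1 : f = f') (e2 : g = g') : x =~ cellcast e1 e2 x.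
Proof. exists e1, e2. reflexivity. Qed.

Lemma cellcast_heq {a b : Ob D} {f g f' g' : Hom a b} (x : Cell f g) (y : Cell f' g') :
  x =~ y -> forall (e1 : f = f') (e2 : g = g'), cellcast e1 e2 x = y.
Proof.
  intros [e1 [e2 H]] e1' e2'.
  rewrite (proof_irrelevance _ e1' e1), (proof_irrelevance _ e2' e2). exact H.
Qed.

Lemma cell_heq_eq {a b : Ob D} {f g : Hom a b} (x y : Cell f g) : x =~ y -> x = y.
Proof. intro H. exact (cellcast_heq x y H eq_refl eq_refl). Qed.

Lemma id2_heq {a b : Ob D} (f g : Hom a b) : f = g -> id2 f =~ id2 g.
Proof. intros ->. apply cell_heq_refl. Qed.

Lemma hcomp_heq {a b c : Ob D} {f f' h h' : Hom a b} {g g' k k' : Hom b c}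
  (y : Cell g g') (x : Cell f f') (y' : Cell k k') (x' : Cell h h') :
  y =~ y' -> x =~ x' -> hcomp y x =~ hcomp y' x'.
Proof. intros [e1 [e2 H]] [e3 [e4 H']]. subst. apply cell_heq_refl. Qed.

Lemma vcomp_heq {a b : Ob D} {f g h f' g' h' : Hom a b}
  (y : Cell g h) (x : Cell f g) (y' : Cell g' h') (x' : Cell f' g') :
  y =~ y' -> x =~ x' -> vcomp y x =~ vcomp y' x'.
Proof.
  intros [e1 [e2 H]] [e3 [e4 H']]. destruct e4, e3, e2.
  rewrite (proof_irrelevance _ e1 eq_refl) in H. simpl in *. subst. apply cell_heq_refl.
Qed.

Lemma hcomp_assoc_heq {a b c d : Ob D} {f f' : Hom a b} {g g' : Hom b c} {h h' : Hom c d}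
  (z : Cell h h') (y : Cell g g') (x : Cell f f') :
  hcomp z (hcomp y x) =~ hcomp (hcomp z y) x.
Proof. rewrite <- (hcomp_assoc (tc_laws D)). apply cell_heq_cellcast. Qed.

End CellHeq.

Infix "=~" := cell_heq (at level 70).

Lemma fcell_hcomp_heq {C D : TwoCat} (H : TwoFunctor C D) {a b c : Ob C}
  {f f' : Hom a b} {g g' : Hom b c} (y : Cell g g') (x : Cell f f') :
  fcell H (hcomp y x) =~ hcomp (fcell H y) (fcell H x).
Proof. rewrite <- (f_hcomp H). apply cell_heq_cellcast. Qed.

Lemma nat2_heq {C D : TwoCat} {F G : TwoFunctor C D} (al : TwoNat F G) {a b : Ob C}
  {f g : Hom a b} (x : Cell f g) :
  hcomp (fcell G x) (id2 (ncomp al a)) =~ hcomp (id2 (ncomp al b)) (fcell F x).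
Proof. rewrite <- (nat2 al). apply cell_heq_cellcast. Qed.

Section EnhancedFactorizationSystem.
Context {D : TwoCat} {E M : HomClass D}.

Lemma efs_lifting : isEFS D E M -> EFS_lifting D E M.
Proof. intros (_ & _ & _ & H & _). exact H. Qed.

Lemma efs_2dim : isEFS D E M -> EFS_2dim D E M.
Proof. intros (_ & _ & _ & _ & H). exact H. Qed.

Lemma inv2_cellcast_id2 {a b : Ob D} (f g : Hom a b) (q : f = g) :
  inv2 (cellcast eq_refl q (id2 f)).
Proof. destruct q. exists (id2 f). simpl. split; apply (vcomp_id_l (tc_laws D)). Qed.

(* The identity case of (ii) yields a filler; uniqueness in (ii) applied to
   the identity 2-cell of any other filler shows that fillers are unique. *)
Lemma efs_unique_diagonal (lifting : EFS_lifting D E M) {X X' Y Y' : Ob D}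
  (e : Hom X X') (m : Hom Y Y') (al : Hom X Y) (al' : Hom X' Y') :
  E _ _ e -> M _ _ m -> comp1 al' e = comp1 m al ->
  exists! d, comp1 d e = al /\ comp1 m d = al'.
Proof.
  intros HE HM q.
  destruct (lifting _ _ _ _ e m al al' (cellcast eq_refl q (id2 _)) HE HM
              (inv2_cellcast_id2 _ _ q))
    as (d & Pt & _ & [de _] & unique_lift & identity_lift).
  destruct (identity_lift (ex_intro _ q eq_refl)) as [md _].
  exists d. split; [split; assumption|].
  intros d' [d'e md'].
  set (Pt' := cellcast eq_refl (eq_sym md') (id2 al')).
  symmetry. refine (f_equal (@projT1 _ _) (unique_lift d' Pt' (inv2_cellcast_id2 _ _ _) _)).
  exists d'e. apply cellcast_heq.
  apply (cell_heq_trans _ (hcomp (id2 al') (id2 e))).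
  - apply hcomp_heq; [apply cell_heq_sym, cell_heq_cellcast | apply cell_heq_refl].
  - rewrite (hcomp_id2 (tc_laws D)). apply cell_heq_cellcast.
Qed.

Record Factorization {a b : Ob D} (f : Hom a b) := {
  fac_ob : Ob D;
  fac_e : Hom a fac_ob;
  fac_m : Hom fac_ob b;
  fac_E : E _ _ fac_e;
  fac_M : M _ _ fac_m;
  fac_eq : f = comp1 fac_m fac_e
}.

Lemma efs_factorization (HEM : isEFS D E M) {a b : Ob D} (f : Hom a b) :
  inhabited (Factorization f).
Proof.
  destruct HEM as (_ & _ & Hf & _).
  destruct (Hf _ _ f) as (c & e & m & He & Hm & Heq).
  exact (inhabits {| fac_ob := c; fac_e := e; fac_m := m; fac_E := He; fac_M := Hm; fac_eq := Heq |}).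
Qed.

Definition factor (HEM : isEFS D E M) {a b : Ob D} (f : Hom a b) : Factorization f :=
  epsilon (efs_factorization HEM f) (fun _ => True).

End EnhancedFactorizationSystem.

Arguments fac_ob {D E M a b f} _.
Arguments fac_e {D E M a b f} _.
Arguments fac_m {D E M a b f} _.
Arguments fac_E {D E M a b f} _.
Arguments fac_M {D E M a b f} _.
Arguments fac_eq {D E M a b f} _.

Section ImageFunctor.
Context (C D : TwoCat) (E M : HomClass D) (HEM : isEFS D E M)
  (F G : TwoFunctor C D) (alpha : TwoNat F G).

Let fac (c : Ob C) := factor HEM (ncomp alpha c).
Definition Iob (c : Ob C) : Ob D := fac_ob (fac c).
Definition eps_comp (c : Ob C) : Hom (fob F c) (Iob c) := fac_e (fac c).
Definition mu_comp (c : Ob C) : Hom (Iob c) (fob G c) := fac_m (fac c).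

Lemma alpha_factor (c : Ob C) : ncomp alpha c = comp1 (mu_comp c) (eps_comp c).
Proof. exact (fac_eq (fac c)). Qed.

Lemma naturality_square {a b : Ob C} (f : Hom a b) :
  comp1 (comp1 (fhom G f) (mu_comp a)) (eps_comp a)
  = comp1 (mu_comp b) (comp1 (eps_comp b) (fhom F f)).
Proof.
  rewrite <- (comp1_assoc (tc_laws D)), <- alpha_factor, (nat1 alpha), alpha_factor.
  symmetry. apply (comp1_assoc (tc_laws D)).
Qed.

Definition IhomP {a b : Ob C} (f : Hom a b) (d : Hom (Iob a) (Iob b)) : Prop :=
  comp1 d (eps_comp a) = comp1 (eps_comp b) (fhom F f)
  /\ comp1 (mu_comp b) d = comp1 (fhom G f) (mu_comp a).

Lemma Ihom_exists {a b : Ob C} (f : Hom a b) : exists! d, IhomP f d.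
Proof.
  apply (efs_unique_diagonal (efs_lifting HEM)); [apply fac_E | apply fac_M |].
  apply naturality_square.
Qed.

Definition Ihom {a b : Ob C} (f : Hom a b) : Hom (Iob a) (Iob b) :=
  proj1_sig (constructive_indefinite_description _ (Ihom_exists f)).

Lemma Ihom_spec {a b : Ob C} (f : Hom a b) :
  IhomP f (Ihom f) /\ forall d, IhomP f d -> Ihom f = d.
Proof. exact (proj2_sig (constructive_indefinite_description _ (Ihom_exists f))). Qed.

Lemma Ihom_eps {a b : Ob C} (f : Hom a b) :
  comp1 (Ihom f) (eps_comp a) = comp1 (eps_comp b) (fhom F f).
Proof. apply Ihom_spec. Qed.

Lemma Ihom_mu {a b : Ob C} (f : Hom a b) :
  comp1 (mu_comp b) (Ihom f) = comp1 (fhom G f) (mu_comp a).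
Proof. apply Ihom_spec. Qed.

Lemma Ihom_unique {a b : Ob C} (f : Hom a b) d : IhomP f d -> Ihom f = d.
Proof. apply Ihom_spec. Qed.

Lemma Ihom_id1 (a : Ob C) : Ihom (id1 a) = id1 (Iob a).
Proof.
  apply Ihom_unique. split.
  - rewrite (f_id1 F), (comp1_id_l (tc_laws D)), (comp1_id_r (tc_laws D)). reflexivity.
  - rewrite (f_id1 G), (comp1_id_l (tc_laws D)), (comp1_id_r (tc_laws D)). reflexivity.
Qed.

Lemma Ihom_comp1 (a b c : Ob C) (g : Hom b c) (f : Hom a b) :
  Ihom (comp1 g f) = comp1 (Ihom g) (Ihom f).
Proof.
  apply Ihom_unique. split.
  - rewrite (f_comp1 F), <- (comp1_assoc (tc_laws D)), Ihom_eps, (comp1_assoc (tc_laws D)),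
      Ihom_eps, <- (comp1_assoc (tc_laws D)). reflexivity.
  - rewrite (f_comp1 G), (comp1_assoc (tc_laws D)), Ihom_mu, <- (comp1_assoc (tc_laws D)),
      Ihom_mu, (comp1_assoc (tc_laws D)). reflexivity.
Qed.

(* Hypothesis of (iii) for the two whiskerings of [x]: both sides are
   [alpha_b * F x = G x * alpha_a] by naturality of alpha. *)
Lemma whiskered_naturality {a b : Ob C} {f g : Hom a b} (x : Cell f g) :
  hcomp (id2 (mu_comp b)) (hcomp (id2 (eps_comp b)) (fcell F x))
  = cellcast (naturality_square f) (naturality_square g)
      (hcomp (hcomp (fcell G x) (id2 (mu_comp a))) (id2 (eps_comp a))).
Proof.
  symmetry. apply cellcast_heq, cell_heq_sym.
  apply (cell_heq_trans _ (hcomp (hcomp (id2 (mu_comp b)) (id2 (eps_comp b))) (fcell F x))).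
  { apply hcomp_assoc_heq. }
  rewrite (hcomp_id2 (tc_laws D)).
  apply (cell_heq_trans _ (hcomp (id2 (ncomp alpha b)) (fcell F x))).
  { apply hcomp_heq; [apply id2_heq, eq_sym, alpha_factor | apply cell_heq_refl]. }
  apply (cell_heq_trans _ (hcomp (fcell G x) (id2 (ncomp alpha a)))).
  { apply cell_heq_sym, nat2_heq. }
  apply (cell_heq_trans _ (hcomp (fcell G x) (hcomp (id2 (mu_comp a)) (id2 (eps_comp a))))).
  { rewrite (hcomp_id2 (tc_laws D)).
    apply hcomp_heq; [apply cell_heq_refl | apply id2_heq, alpha_factor]. }
  apply hcomp_assoc_heq.
Qed.

Definition IcellP {a b : Ob C} {f g : Hom a b} (x : Cell f g) {d1 d2 : Hom (Iob a) (Iob b)}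
  (Delta : Cell d1 d2) : Prop :=
  hcomp Delta (id2 (eps_comp a)) =~ hcomp (id2 (eps_comp b)) (fcell F x)
  /\ hcomp (id2 (mu_comp b)) Delta =~ hcomp (fcell G x) (id2 (mu_comp a)).

Lemma Icell_exists {a b : Ob C} {f g : Hom a b} (x : Cell f g) :
  exists! Delta : Cell (Ihom f) (Ihom g), IcellP x Delta.
Proof.
  destruct (efs_2dim HEM _ _ _ _ (eps_comp a) (mu_comp b) _ _ _ _
              (naturality_square f) (naturality_square g)
              (hcomp (id2 (eps_comp b)) (fcell F x))
              (hcomp (fcell G x) (id2 (mu_comp a))) (fac_E _) (fac_M _)
              (whiskered_naturality x) _ _ (Ihom_eps f) (Ihom_eps g) (Ihom_mu f) (Ihom_mu g))
    as (Delta & [He Hm] & uniq).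
  exists Delta. split.
  - split; [rewrite <- He | rewrite <- Hm]; apply cell_heq_cellcast.
  - intros Delta' [He' Hm']. apply uniq. split; apply cellcast_heq; assumption.
Qed.

Definition Icell {a b : Ob C} {f g : Hom a b} (x : Cell f g) : Cell (Ihom f) (Ihom g) :=
  proj1_sig (constructive_indefinite_description _ (Icell_exists x)).

Lemma Icell_spec {a b : Ob C} {f g : Hom a b} (x : Cell f g) :
  IcellP x (Icell x) /\ forall Delta, IcellP x Delta -> Icell x = Delta.
Proof. exact (proj2_sig (constructive_indefinite_description _ (Icell_exists x))). Qed.

Lemma Icell_eps {a b : Ob C} {f g : Hom a b} (x : Cell f g) :
  hcomp (Icell x) (id2 (eps_comp a)) =~ hcomp (id2 (eps_comp b)) (fcell F x).
Proof. apply Icell_spec. Qed.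

Lemma Icell_mu {a b : Ob C} {f g : Hom a b} (x : Cell f g) :
  hcomp (id2 (mu_comp b)) (Icell x) =~ hcomp (fcell G x) (id2 (mu_comp a)).
Proof. apply Icell_spec. Qed.

Lemma Icell_unique {a b : Ob C} {f g : Hom a b} (x : Cell f g) {d1 d2 : Hom (Iob a) (Iob b)}
  (Delta : Cell d1 d2) : d1 = Ihom f -> d2 = Ihom g -> IcellP x Delta -> Delta =~ Icell x.
Proof.
  intros -> -> H. rewrite (proj2 (Icell_spec x) Delta H). apply cell_heq_refl.
Qed.

Lemma Icell_id2 (a b : Ob C) (f : Hom a b) : Icell (id2 f) = id2 (Ihom f).
Proof.
  symmetry. apply cell_heq_eq, Icell_unique; try reflexivity. split.
  - rewrite !(hcomp_id2 (tc_laws D)), (f_id2 F), (hcomp_id2 (tc_laws D)).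
    apply id2_heq, Ihom_eps.
  - rewrite !(hcomp_id2 (tc_laws D)), (f_id2 G), (hcomp_id2 (tc_laws D)).
    apply id2_heq, Ihom_mu.
Qed.

Lemma Icell_vcomp (a b : Ob C) (f g h : Hom a b) (y : Cell g h) (x : Cell f g) :
  Icell (vcomp y x) = vcomp (Icell y) (Icell x).
Proof.
  symmetry. apply cell_heq_eq, Icell_unique; try reflexivity. split.
  - rewrite <- (vcomp_id_l (tc_laws D) _ _ _ _ (id2 (eps_comp a))) at 1.
    rewrite (interchange (tc_laws D)), (f_vcomp F).
    rewrite <- (vcomp_id_l (tc_laws D) _ _ _ _ (id2 (eps_comp b))) at 1.
    rewrite (interchange (tc_laws D)).
    apply vcomp_heq; apply Icell_eps.
  - rewrite <- (vcomp_id_l (tc_laws D) _ _ _ _ (id2 (mu_comp b))) at 1.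
    rewrite (interchange (tc_laws D)), (f_vcomp G).
    rewrite <- (vcomp_id_l (tc_laws D) _ _ _ _ (id2 (mu_comp a))) at 1.
    rewrite (interchange (tc_laws D)).
    apply vcomp_heq; apply Icell_mu.
Qed.

Lemma Icell_hcomp (a b c : Ob C) (f f' : Hom a b) (g g' : Hom b c)
  (y : Cell g g') (x : Cell f f') :
  cellcast (Ihom_comp1 _ _ _ g f) (Ihom_comp1 _ _ _ g' f') (Icell (hcomp y x))
  = hcomp (Icell y) (Icell x).
Proof.
  apply cellcast_heq, cell_heq_sym.
  apply Icell_unique; try (symmetry; apply Ihom_comp1). split.
  - apply (cell_heq_trans _ (hcomp (Icell y) (hcomp (Icell x) (id2 (eps_comp a))))).
    { apply cell_heq_sym, hcomp_assoc_heq. }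
    apply (cell_heq_trans _ (hcomp (Icell y) (hcomp (id2 (eps_comp b)) (fcell F x)))).
    { apply hcomp_heq; [apply cell_heq_refl | apply Icell_eps]. }
    apply (cell_heq_trans _ (hcomp (hcomp (Icell y) (id2 (eps_comp b))) (fcell F x))).
    { apply hcomp_assoc_heq. }
    apply (cell_heq_trans _ (hcomp (hcomp (id2 (eps_comp c)) (fcell F y)) (fcell F x))).
    { apply hcomp_heq; [apply Icell_eps | apply cell_heq_refl]. }
    apply (cell_heq_trans _ (hcomp (id2 (eps_comp c)) (hcomp (fcell F y) (fcell F x)))).
    { apply cell_heq_sym, hcomp_assoc_heq. }
    apply hcomp_heq; [apply cell_heq_refl | apply cell_heq_sym, fcell_hcomp_heq].
  - apply (cell_heq_trans _ (hcomp (hcomp (id2 (mu_comp c)) (Icell y)) (Icell x))).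
    { apply hcomp_assoc_heq. }
    apply (cell_heq_trans _ (hcomp (hcomp (fcell G y) (id2 (mu_comp b))) (Icell x))).
    { apply hcomp_heq; [apply Icell_mu | apply cell_heq_refl]. }
    apply (cell_heq_trans _ (hcomp (fcell G y) (hcomp (id2 (mu_comp b)) (Icell x)))).
    { apply cell_heq_sym, hcomp_assoc_heq. }
    apply (cell_heq_trans _ (hcomp (fcell G y) (hcomp (fcell G x) (id2 (mu_comp a))))).
    { apply hcomp_heq; [apply cell_heq_refl | apply Icell_mu]. }
    apply (cell_heq_trans _ (hcomp (hcomp (fcell G y) (fcell G x)) (id2 (mu_comp a)))).
    { apply hcomp_assoc_heq. }
    apply hcomp_heq; [apply cell_heq_sym, fcell_hcomp_heq | apply cell_heq_refl].
Qed.

Definition Ifun : TwoFunctor C D :=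
  mkTwoFunctor C D Iob (@Ihom) (@Icell) Ihom_id1 Ihom_comp1 Icell_id2 Icell_vcomp Icell_hcomp.

Lemma eps_nat2 (a b : Ob C) (f g : Hom a b) (x : Cell f g) :
  cellcast (Ihom_eps f) (Ihom_eps g) (hcomp (fcell Ifun x) (id2 (eps_comp a)))
  = hcomp (id2 (eps_comp b)) (fcell F x).
Proof. apply cellcast_heq, Icell_eps. Qed.

Definition eps : TwoNat F Ifun := mkTwoNat F Ifun eps_comp (fun a b f => Ihom_eps f) eps_nat2.

Lemma mu_nat2 (a b : Ob C) (f g : Hom a b) (x : Cell f g) :
  cellcast (eq_sym (Ihom_mu f)) (eq_sym (Ihom_mu g)) (hcomp (fcell G x) (id2 (mu_comp a)))
  = hcomp (id2 (mu_comp b)) (fcell Ifun x).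
Proof. apply cellcast_heq, cell_heq_sym, Icell_mu. Qed.

Definition mu : TwoNat Ifun G := mkTwoNat Ifun G mu_comp (fun a b f => eq_sym (Ihom_mu f)) mu_nat2.

End ImageFunctor.

Theorem proposition1p9 (C D : TwoCat) (E M : HomClass D) (HEM : isEFS D E M)
  (F G : TwoFunctor C D) (alpha : TwoNat F G) :
  exists (I : TwoFunctor C D) (eps : TwoNat F I) (mu : TwoNat I G),
    (forall c : Ob C, ncomp alpha c = comp1 (ncomp mu c) (ncomp eps c)) /\
    (forall c : Ob C, E _ _ (ncomp eps c) /\ M _ _ (ncomp mu c)).
Proof.
  exists (Ifun C D E M HEM F G alpha), (eps C D E M HEM F G alpha), (mu C D E M HEM F G alpha).
  split; intro c; simpl.
  - apply alpha_factor.
  - split; [apply fac_E | apply fac_M].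
Qed.
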